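(* Let $f=\sum_{|\alpha|=d}c_\alpha x^\alpha\in\mathbb{R}[x_1,\dots,x_n]$ be a form of degree $d\ge1$ with $c_\alpha>0$ for all $\alpha\in\mathbb{Z}_{\ge0}^n$ with $|\alpha|=d$. Let $A=\{p/f^r: r\ge0,\ p\in\mathbb{R}[x_1,\dots,x_n] \text{ homogeneous of degree } dr \text{ (or zero)}\}\subset\mathbb{R}(x_1,\dots,x_n)$, and let $T\subset A$ be the subsemiring generated by $\mathbb{R}_{\ge0}$ and the elements $y_\alpha=x^\alpha/f$ ($|\alpha|=d$). Then $T$ is archimedean, i.e. for every $a\in A$ there is $N\in\mathbb{Z}$ with $N+a\in T$.
   Context: A semiring is a subset containing $0,1$ and closed under addition and multiplication. $T$ consists exactly of the fractions $p/f^r$ with $r\ge0$ and $p$ homogeneous of degree $dr$ with all coefficients nonnegative. *)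

From HB Require Import structures.
From mathcomp Require Import all_boot all_order all_algebra.
Set Implicit Arguments. Unset Strict Implicit. Unset Printing Implicit Defensive.
Import Order.TTheory GRing.Theory Num.Theory.
Local Open Scope ring_scope.

Definition mon (n : nat) := {ffun 'I_n -> nat}.
Definition mdeg n (a : mon n) : nat := (\sum_i a i)%N.

(* A (formal) polynomial in x_1..x_n over R is given by its coefficient
   function alpha |-> c_alpha.  We only ever use homogeneous ones (which are
   automatically finitely supported), so no finiteness condition is needed. *)
Definition mpoly (R : Type) n := mon n -> R.

Section MPoly.
Variables (R : comNzRingType) (n : nat).

Definition homog (k : nat) (p : mpoly R n) : Prop :=
  forall a : mon n, mdeg a <> k -> p a = 0.

Definition madd (p q : mpoly R n) : mpoly R n := fun a => p a + q a.

Definition mmul (p q : mpoly R n) : mpoly R n := fun a =>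
  \sum_(b : {ffun 'I_n -> 'I_(mdeg a).+1} | [forall i, (b i <= a i)%N])
     p [ffun i => nat_of_ord (b i)] * q [ffun i => (a i - b i)%N].

Definition mconst (c : R) : mpoly R n := fun a => if mdeg a == 0%N then c else 0.

Definition mmono (al : mon n) : mpoly R n := fun a => if a == al then 1 else 0.

Definition mpow (p : mpoly R n) (r : nat) : mpoly R n := iter r (mmul p) (mconst 1).

(* Fractions p / f^r are represented by pairs (p, r). *)
Definition mfrac := (mpoly R n * nat)%type.

Definition inA (d : nat) (a : mfrac) : Prop := homog (d * a.2) a.1.

Definition frac_eq (f : mpoly R n) (a b : mfrac) : Prop :=
  mmul a.1 (mpow f b.2) = mmul b.1 (mpow f a.2).

Definition fadd (f : mpoly R n) (a b : mfrac) : mfrac :=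
  (madd (mmul a.1 (mpow f b.2)) (mmul b.1 (mpow f a.2)), (a.2 + b.2)%N).

Definition fmul (a b : mfrac) : mfrac := (mmul a.1 b.1, (a.2 + b.2)%N).

End MPoly.

(* T = subsemiring of A generated by R_{>=0} and y_alpha = x^alpha / f,
   |alpha| = d; taken up to equality of rational functions. *)
Inductive inT (R : numDomainType) (n d : nat) (f : mpoly R n) : mfrac R n -> Prop :=
| T_const (c : R) : 0 <= c -> inT d f (@mconst R n c, 0%N)
| T_y (al : mon n) : mdeg al = d -> inT d f (@mmono R n al, 1%N)
| T_add a b : inT d f a -> inT d f b -> inT d f (fadd f a b)
| T_mul a b : inT d f a -> inT d f b -> inT d f (fmul a b)
| T_eq a b : inT d f a -> inA d b -> frac_eq f a b -> inT d f b.

From HB Require Import structures.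
From mathcomp Require Import all_boot all_order all_algebra.
From Stdlib Require Import FunctionalExtensionality.
Set Implicit Arguments. Unset Strict Implicit. Unset Printing Implicit Defensive.
Import Order.TTheory GRing.Theory Num.Theory.
Local Open Scope ring_scope.

(* Write a = p / f^r with p homogeneous of degree d r.  Every coefficient of
   f^r in degree d r is positive, so for N large enough N f^r + p has only
   nonnegative coefficients.  Hence N + a = (N f^r + p) / f^r is a nonnegative
   combination of the fractions x^beta / f^r with |beta| = d r, and each of
   these is a product of r generators y_alpha. *)

Section Monomials.
Variable n : nat.
Implicit Types (a al be ga : mon n) (k : nat).

Definition mon0 : mon n := [ffun _ => 0%N].
Definition mon_add al be : mon n := [ffun i => (al i + be i)%N].
Definition mon_delta (i : 'I_n) : mon n := [ffun j => nat_of_bool (j == i)].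

Lemma leq_mdeg a i : (a i <= mdeg a)%N.
Proof. by rewrite /mdeg (bigD1 i) //= leq_addr. Qed.

Lemma mdeg_add al be : mdeg (mon_add al be) = (mdeg al + mdeg be)%N.
Proof. by rewrite /mdeg -big_split; apply: eq_bigr => i _; rewrite ffunE. Qed.

Lemma mdeg_eq0 a : (mdeg a == 0%N) = (a == mon0).
Proof.
apply/eqP/eqP => [a0|->]; last by rewrite /mdeg big1 // => i _; rewrite ffunE.
by apply/ffunP => i; apply/eqP; rewrite ffunE -leqn0 -a0 leq_mdeg.
Qed.

Lemma mdeg_delta i : mdeg (mon_delta i) = 1%N.
Proof.
rewrite /mdeg (bigD1 i) //= ffunE eqxx big1 // => j /negbTE ji.
by rewrite ffunE ji.
Qed.

Lemma mon_addA : associative mon_add.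
Proof. by move=> al be ga; apply/ffunP => i; rewrite !ffunE addnA. Qed.

Lemma mon_add0l : left_id mon0 mon_add.
Proof. by move=> a; apply/ffunP => i; rewrite !ffunE. Qed.

Lemma mon_add0r : right_id mon0 mon_add.
Proof. by move=> a; apply/ffunP => i; rewrite !ffunE addn0. Qed.

Lemma exists_submon k be : (k <= mdeg be)%N ->
  exists2 al : mon n, (forall i, al i <= be i)%N & mdeg al = k.
Proof.
elim: k => [_|k IH lt_k_be].
  by exists mon0 => [i|]; rewrite ?ffunE //; apply/eqP; rewrite mdeg_eq0.
have [al le_al_be deg_al] := IH (ltnW lt_k_be).
have [i lt_i] : exists i, (al i < be i)%N.
  apply/existsP; move: lt_k_be; apply: contraLR; rewrite negb_exists => /forallP h.
  by rewrite -leqNgt -deg_al; apply: leq_sum => i _; rewrite leqNgt h.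
exists (mon_add al (mon_delta i)); last by rewrite mdeg_add mdeg_delta deg_al addn1.
by move=> j; rewrite !ffunE; case: eqP => [->|_]; rewrite ?addn1 ?addn0.
Qed.

Lemma mon_split k l be : mdeg be = (k + l)%N ->
  exists al ga, [/\ mdeg al = k, mdeg ga = l & be = mon_add al ga].
Proof.
move=> deg_be; have [|al le_al_be deg_al] := exists_submon (k := k) (be := be).
  by rewrite deg_be leq_addr.
set ga : mon n := [ffun i => (be i - al i)%N].
have be_split : be = mon_add al ga by apply/ffunP => i; rewrite !ffunE subnKC ?le_al_be.
exists al, ga; split=> //.
by apply/eqP; rewrite -(eqn_add2l k) -deg_be be_split mdeg_add deg_al.
Qed.

(* Exponents of a degree-k monomial are at most k. *)
Definition mons_of_deg k : seq (mon n) :=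
  undup [seq m <- [seq [ffun i => nat_of_ord (b i)] : mon n
                      | b : {ffun 'I_n -> 'I_k.+1} <- enum {: {ffun 'I_n -> 'I_k.+1}}]
         | mdeg m == k].

Lemma mem_mons_of_deg k a : (a \in mons_of_deg k) = (mdeg a == k).
Proof.
rewrite mem_undup mem_filter; case: eqP => //= deg_a.
apply/mapP; exists [ffun i => inord (a i)]; first by rewrite mem_enum.
by apply/ffunP => i; rewrite !ffunE inordK // ltnS -deg_a leq_mdeg.
Qed.

Lemma uniq_mons_of_deg k : uniq (mons_of_deg k).
Proof. exact: undup_uniq. Qed.

End Monomials.

Section Polynomials.
Variables (R : comNzRingType) (n : nat).
Implicit Types (p q : mpoly R n) (a al be ga : mon n) (k : nat).

Lemma mmul_split p q al ga :
  mmul p q (mon_add al ga) = p al * q ga +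
    \sum_(b : {ffun 'I_n -> 'I_(mdeg (mon_add al ga)).+1} |
          [forall i, (b i <= mon_add al ga i)%N] && ([ffun i => nat_of_ord (b i)] != al))
       p [ffun i => nat_of_ord (b i)] * q [ffun i => (mon_add al ga i - b i)%N].
Proof.
set a := mon_add al ga.
have lt_al i : (al i < (mdeg a).+1)%N.
  by rewrite ltnS (leq_trans _ (leq_mdeg a i)) // ffunE leq_addr.
pose b0 : {ffun 'I_n -> 'I_(mdeg a).+1} := [ffun i => Ordinal (lt_al i)].
have b0E : [ffun i => nat_of_ord (b0 i)] = al by apply/ffunP => i; rewrite !ffunE.
have b0_inj (b : {ffun 'I_n -> 'I_(mdeg a).+1}) :
  ([ffun i => nat_of_ord (b i)] == al) = (b == b0).
  rewrite -b0E; apply/eqP/eqP => [eb|-> //]; apply/ffunP => i; apply: val_inj.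
  by move/ffunP/(_ i): eb; rewrite !ffunE.
rewrite /mmul (bigD1 b0) /=; last by apply/forallP => i; rewrite !ffunE leq_addr.
have -> : [ffun i => (a i - b0 i)%N] = ga by apply/ffunP => i; rewrite !ffunE addKn.
by rewrite b0E; congr (_ + _); apply: eq_bigl => b; rewrite b0_inj.
Qed.

Lemma mmul_mono al be : mmul (mmono R al) (mmono R be) = mmono R (mon_add al be).
Proof.
apply: functional_extensionality => a; rewrite {3}/mmono.
case: eqP => [->|ne].
  rewrite mmul_split /mmono !eqxx mulr1 big1 ?addr0 // => b /andP [_ /negbTE ->].
  by rewrite mul0r.
rewrite /mmul big1 // => b /forallP le_b; rewrite /mmono.
case: eqP => [e1|]; last by rewrite mul0r.
case: eqP => [e2|]; last by rewrite mulr0.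
by case: ne; apply/ffunP => i; rewrite -e1 -e2 !ffunE subnKC ?le_b.
Qed.

(* [mmul] is only well behaved on finitely supported coefficient functions;
   homogeneous polynomials are computed with as finite sums of monomials. *)
Definition msum (s : seq (R * mon n)) : mpoly R n :=
  fun a => \sum_(x <- s) x.1 * mmono R x.2 a.

Lemma msum_homog k s : (forall x, x \in s -> mdeg x.2 = k) -> homog k (msum s).
Proof.
move=> deg_s a deg_a; rewrite /msum big1_seq // => x /andP [_ xs]; rewrite /mmono.
case: eqP => [ax|_]; last by rewrite mulr0.
by case: deg_a; rewrite ax deg_s.
Qed.

Lemma homog_msum k p : homog k p -> p = msum [seq (p m, m) | m <- mons_of_deg n k].
Proof.
move=> hp; apply: functional_extensionality => a; rewrite /msum big_map /=.
have [deg_a|deg_a] := eqVneq (mdeg a) k.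
  rewrite (bigD1_seq a) ?uniq_mons_of_deg ?mem_mons_of_deg ?deg_a //=.
  rewrite /mmono eqxx mulr1 big1 ?addr0 // => m /negbTE ma.
  by rewrite eq_sym ma mulr0.
rewrite hp ?big1_seq //; last exact/eqP.
move=> m /andP [_]; rewrite mem_mons_of_deg /mmono => /eqP deg_m.
by case: eqP => [am|_]; [case/eqP: deg_a; rewrite am | rewrite mulr0].
Qed.

Lemma mmul_msum s t : mmul (msum s) (msum t) =
  msum [seq (x.1 * y.1, mon_add x.2 y.2) | x <- s, y <- t].
Proof.
apply: functional_extensionality => a; rewrite [RHS]big_allpairs_dep /=.
under eq_bigr do under eq_bigr do rewrite -mmul_mono /mmul mulr_sumr.
under eq_bigr do rewrite exchange_big; rewrite exchange_big /mmul.
apply: eq_bigr => b _; rewrite /msum mulr_suml; apply: eq_bigr => x _.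
by rewrite mulr_sumr; apply: eq_bigr => y _ /=; rewrite mulrACA.
Qed.

Lemma mmul_homog k l p q : homog k p -> homog l q -> homog (k + l) (mmul p q).
Proof.
move=> /homog_msum -> /homog_msum ->; rewrite mmul_msum; apply: msum_homog.
move=> _ /allpairsP [[x y] [/mapP [m1 m1k ->] /mapP [m2 m2l ->] ->]] /=.
by rewrite mdeg_add; move: m1k m2l; rewrite !mem_mons_of_deg => /eqP-> /eqP->.
Qed.

Lemma mmulA_homog k l m p q r : homog k p -> homog l q -> homog m r ->
  mmul (mmul p q) r = mmul p (mmul q r).
Proof.
move=> /homog_msum -> /homog_msum -> /homog_msum ->; rewrite !mmul_msum.
apply: functional_extensionality => a; rewrite /msum !big_allpairs_dep /=.
apply: eq_bigr => x _; rewrite big_allpairs_dep; apply: eq_bigr => y _.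
by apply: eq_bigr => z _ /=; rewrite mon_addA mulrA.
Qed.

Lemma mconst_msum c : mconst c = msum [:: (c, mon0 n)].
Proof.
apply: functional_extensionality => a.
by rewrite /mconst /msum big_seq1 /mmono -mdeg_eq0; case: eqP; rewrite ?mulr1 ?mulr0.
Qed.

Lemma mmul_constl c k p : homog k p -> mmul (mconst c) p = fun a => c * p a.
Proof.
move=> /homog_msum ->; rewrite mconst_msum mmul_msum.
apply: functional_extensionality => a; rewrite /msum big_allpairs_dep big_seq1.
by rewrite mulr_sumr; apply: eq_bigr => y _ /=; rewrite mon_add0l mulrA.
Qed.

Lemma mmul_constr c k p : homog k p -> mmul p (mconst c) = fun a => c * p a.
Proof.
move=> /homog_msum ->; rewrite mconst_msum mmul_msum.
apply: functional_extensionality => a; rewrite /msum big_allpairs_dep mulr_sumr.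
by apply: eq_bigr => y _; rewrite big_seq1 /= mon_add0r mulrAC mulrC.
Qed.

Lemma mmulDl p q r : mmul (madd p q) r = madd (mmul p r) (mmul q r).
Proof.
apply: functional_extensionality => a; rewrite /mmul /madd -big_split.
by apply: eq_bigr => b _; rewrite mulrDl.
Qed.

Lemma madd_homog k p q : homog k p -> homog k q -> homog k (madd p q).
Proof. by move=> hp hq a deg_a; rewrite /madd hp // hq // addr0. Qed.

Lemma mmono_homog be : homog (mdeg be) (mmono R be).
Proof. by move=> a; rewrite /mmono; case: eqP => // ->. Qed.

Section Powers.
Variables (d : nat) (f : mpoly R n).
Hypothesis hf : homog d f.

Lemma mpow_homog r : homog (d * r) (mpow f r).
Proof.
elim: r => [|r IH]; last by rewrite mulnS; apply: mmul_homog.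
by rewrite muln0 => a deg_a; rewrite /mpow /= /mconst; case: eqP.
Qed.

Lemma mpowD r s : mpow f (r + s) = mmul (mpow f r) (mpow f s).
Proof.
elim: r => [|r IH].
  rewrite add0n /mpow /= (mmul_constl _ (mpow_homog (r := s))).
  by apply: functional_extensionality => a; rewrite mul1r.
rewrite addSn /= -/(mpow f (r + s)) -/(mpow f r) IH.
by rewrite (mmulA_homog hf (mpow_homog (r := r)) (mpow_homog (r := s))).
Qed.

End Powers.
End Polynomials.

Section Nonnegative.
Variables (R : numDomainType) (n : nat).
Implicit Types (p q : mpoly R n) (al ga : mon n).

Definition mnonneg (p : mpoly R n) := forall a, 0 <= p a.

Lemma mmul_ge0 p q : mnonneg p -> mnonneg q -> mnonneg (mmul p q).
Proof. by move=> p0 q0 a; apply: sumr_ge0 => b _; rewrite mulr_ge0. Qed.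

Lemma mmul_ge_term p q al ga : mnonneg p -> mnonneg q ->
  p al * q ga <= mmul p q (mon_add al ga).
Proof.
by move=> p0 q0; rewrite mmul_split lerDl; apply: sumr_ge0 => b _; rewrite mulr_ge0.
Qed.

End Nonnegative.

Section PositiveForm.
Variables (R : numDomainType) (n d : nat) (f : mpoly R n).
Hypotheses (hf : homog d f) (f_gt0 : forall al : mon n, mdeg al = d -> 0 < f al).

Lemma f_ge0 : mnonneg f.
Proof. by move=> a; have [/f_gt0/ltW|/eqP/hf->] := eqVneq (mdeg a) d. Qed.

Lemma mpow_ge0 r : mnonneg (mpow f r).
Proof.
elim: r => [a|r IH]; last exact: mmul_ge0 f_ge0 IH.
by rewrite /mpow /= /mconst; case: ifP.
Qed.

Lemma mpow_gt0 r a : mdeg a = (d * r)%N -> 0 < mpow f r a.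
Proof.
elim: r a => [|r IH] a deg_a.
  by rewrite /mpow /= /mconst deg_a muln0 eqxx ltr01.
rewrite mulnS in deg_a; have [al [ga [deg_al deg_ga ->]]] := mon_split deg_a.
apply: lt_le_trans (mmul_ge_term al ga f_ge0 (mpow_ge0 r)).
by rewrite mulr_gt0 ?f_gt0 ?IH.
Qed.

End PositiveForm.

Section SemiringT.
Variables (R : numDomainType) (n d : nat) (f : mpoly R n).
Hypothesis hf : homog d f.
Implicit Types (p q : mpoly R n) (be : mon n).

Lemma mmono_inT r be : mdeg be = (d * r)%N -> inT d f (mmono R be, r).
Proof.
elim: r be => [|r IH] be deg_be.
  have -> : mmono R be = mconst 1.
    move/eqP: deg_be; rewrite muln0 mdeg_eq0 => /eqP->.
    by apply: functional_extensionality => a; rewrite /mmono /mconst mdeg_eq0.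
  exact: T_const ler01.
rewrite mulnS in deg_be; have [al [ga [deg_al deg_ga ->]]] := mon_split deg_be.
by rewrite -mmul_mono; apply: T_mul (T_y f deg_al) (IH _ deg_ga).
Qed.

Lemma inT_scale c r p : 0 <= c -> homog (d * r) p -> inT d f (p, r) ->
  inT d f (fun a => c * p a, r).
Proof.
move=> c0 hp Tp; have := T_mul (T_const d f c0) Tp.
by rewrite /fmul /= (mmul_constl _ hp).
Qed.

Lemma inT_madd r p q : homog (d * r) p -> homog (d * r) q ->
  inT d f (p, r) -> inT d f (q, r) -> inT d f (madd p q, r).
Proof.
move=> hp hq Tp Tq; have hF := mpow_homog hf (r := r).
apply: (T_eq (T_add Tp Tq)); first exact: madd_homog.
rewrite /frac_eq /fadd /= (mpowD hf) !mmulDl.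
by rewrite (mmulA_homog hp hF hF) (mmulA_homog hq hF hF).
Qed.

Lemma msum_inT r s : (forall x, x \in s -> 0 <= x.1 /\ mdeg x.2 = (d * r)%N) ->
  inT d f (msum s, r).
Proof.
have hF := mpow_homog hf (r := r).
elim: s => [|x s IH] hs.
  apply: (T_eq (T_const d f (lexx 0))); first exact: msum_homog.
  rewrite /frac_eq /= (mmul_constl _ hF); apply: functional_extensionality => a.
  by rewrite mul0r /mmul big1 // => b _; rewrite /msum big_nil mul0r.
have [x1_ge0 deg_x2] := hs x (mem_head x s).
have hs' y : y \in s -> 0 <= y.1 /\ mdeg y.2 = (d * r)%N.
  by move=> ys; apply: hs; rewrite in_cons ys orbT.
have -> : msum (x :: s) = madd (fun a => x.1 * mmono R x.2 a) (msum s).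
  by apply: functional_extensionality => a; rewrite /msum big_cons.
have hx : homog (d * r) (mmono R x.2) by rewrite -deg_x2; apply: mmono_homog.
apply: inT_madd; last exact: IH.
- by move=> a /hx ->; rewrite mulr0.
- by apply: msum_homog => y /hs' [].
- exact: inT_scale x1_ge0 hx (mmono_inT deg_x2).
Qed.

Lemma mnonneg_inT r p : homog (d * r) p -> mnonneg p -> inT d f (p, r).
Proof.
move=> hp p0; rewrite (homog_msum hp); apply: msum_inT => _ /mapP [m deg_m ->].
by rewrite mem_mons_of_deg in deg_m; split=> /=; [exact: p0 | exact/eqP].
Qed.

End SemiringT.

Lemma exists_shift_mnonneg (R : archiRealFieldType) (n d r : nat) (f p : mpoly R n) :
  homog d f -> (forall al : mon n, mdeg al = d -> 0 < f al) -> homog (d * r) p ->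
  exists N : nat, mnonneg (fun a => N%:R * mpow f r a + p a).
Proof.
move=> hf f_gt0 hp.
pose N := (\max_(m <- mons_of_deg n (d * r)) Num.bound (`|p m| / mpow f r m))%N.
exists N => a; have [deg_a|/eqP deg_a] := eqVneq (mdeg a) (d * r)%N; last first.
  by rewrite hp // (mpow_homog hf) // mulr0 add0r.
have fr_gt0 := mpow_gt0 hf f_gt0 deg_a.
have : `|p a| / mpow f r a <= N%:R.
  apply: le_trans (ltW (archi_boundP _)) _; first by rewrite divr_ge0 // ltW.
  rewrite ler_nat /N (leq_bigmax_seq (F := fun m => Num.bound _)) //.
  by rewrite mem_mons_of_deg deg_a.
rewrite ler_pdivrMr // -lerBlDr sub0r => le_pa.
by apply: le_trans (ler_norm _) _; rewrite normrN.
Qed.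

Theorem mainTheorem6 (R : archiRealFieldType) (n d : nat) (f : mpoly R n)
  (hn : (0 < n)%N) (hd : (1 <= d)%N)
  (hf : homog d f) (hpos : forall al : mon n, mdeg al = d -> 0 < f al) :
  forall a : mfrac R n, inA d a ->
    exists N : int, inT d f (fadd f (@mconst R n (N%:~R), 0%N) a).
Proof.
case=> p r; rewrite /inA /= => hp.
have [N shift_ge0] := exists_shift_mnonneg hf hpos hp.
exists N; rewrite /fadd /= (mmul_constl _ (mpow_homog hf (r := r))).
rewrite (mmul_constr _ hp) add0n.
apply: (mnonneg_inT hf).
  by apply: madd_homog => a deg_a; rewrite ?hp ?(mpow_homog hf) ?mulr0.
by move=> a; rewrite /madd mul1r; apply: shift_ge0.
Qed.
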